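(* Let $N_T,N_R\ge 1$ be integers, $N=N_TN_R$, $\mathcal{R}>0$, $\beta>0$, and define $\xi=[2\pi(2^{2\mathcal{R}}-1)]^{-1/2}$, $\tau=2^{\mathcal{R}}-1$, $\varphi_H=\tau+\frac{1}{2\xi\sqrt\beta}$, $\varphi_L=\tau-\frac{1}{2\xi\sqrt\beta}$. For $\bar\gamma_k>0$ let $$F_{\mathrm{MRC}}(\gamma)=\Big\{1-e^{-\gamma/\bar\gamma_k}\sum_{n=0}^{N_R-1}\frac{1}{n!}\Big(\frac{\gamma}{\bar\gamma_k}\Big)^n\Big\}^{N_T},\qquad F_{\mathrm{SC}}(\gamma)=\{1-e^{-\gamma/\bar\gamma_k}\}^{N},$$ and $\bar\varepsilon_k^{\mathrm{TAS/MRC}}=\xi\sqrt\beta\int_{\varphi_L}^{\varphi_H}F_{\mathrm{MRC}}(\gamma)d\gamma$, $\bar\varepsilon_k^{\mathrm{TAS/SC}}=\xi\sqrt\beta\int_{\varphi_L}^{\varphi_H}F_{\mathrm{SC}}(\gamma)d\gamma$. Define $$\tilde\varepsilon_k^{\infty\,\mathrm{TAS/MRC}}=\frac{\xi\sqrt\beta\,[\varphi_H^{N+1}-\varphi_L^{N+1}]}{(N_R!)^{N_T}\,\bar\gamma_k^{N}\,(N+1)},\qquad \tilde\varepsilon_k^{\infty\,\mathrm{TAS/SC}}=\frac{\xi\sqrt\beta\,[\varphi_H^{N+1}-\varphi_L^{N+1}]}{\bar\gamma_k^{N}\,(N+1)}.$$ Then, as $\bar\gamma_k\to\infty$, $\bar\varepsilon_k^{\mathrm{TAS/MRC}}\sim\tilde\varepsilon_k^{\infty\,\mathrm{TAS/MRC}}$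 and $\bar\varepsilon_k^{\mathrm{TAS/SC}}\sim\tilde\varepsilon_k^{\infty\,\mathrm{TAS/SC}}$ (i.e., the ratios tend to $1$).
   Context: $\bar\varepsilon_k^{\mathcal X}$ is the paper's approximation of the average per-hop block error rate in the finite-blocklength regime for transmit antenna selection with maximum ratio combining (MRC) or selection combining (SC) over Rayleigh fading with average per-link SNR $\bar\gamma_k$; $\tilde\varepsilon_k^{\infty\,\mathcal X}$ is the asymptotic per-hop BLER. *)

From Stdlib Require Import Reals.
From Coquelicot Require Import Coquelicot.
Open Scope R_scope.

(* Parameters: Rt = target rate \mathcal{R}, beta = blocklength. *)
Definition xi (Rt : R) : R := / sqrt (2 * PI * (Rpower 2 (2 * Rt) - 1)).
Definition tau (Rt : R) : R := Rpower 2 Rt - 1.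
Definition phiH (Rt beta : R) : R := tau Rt + / (2 * xi Rt * sqrt beta).
Definition phiL (Rt beta : R) : R := tau Rt - / (2 * xi Rt * sqrt beta).

Definition F_MRC (NT NR : nat) (gbar g : R) : R :=
  (1 - exp (- (g / gbar)) *
       sum_f_R0 (fun n => / INR (Factorial.fact n) * (g / gbar) ^ n) (NR - 1)) ^ NT.

Definition F_SC (NT NR : nat) (gbar g : R) : R :=
  (1 - exp (- (g / gbar))) ^ (NT * NR).

Definition eps_MRC (NT NR : nat) (Rt beta gbar : R) : R :=
  xi Rt * sqrt beta * RInt (F_MRC NT NR gbar) (phiL Rt beta) (phiH Rt beta).

Definition eps_SC (NT NR : nat) (Rt beta gbar : R) : R :=
  xi Rt * sqrt beta * RInt (F_SC NT NR gbar) (phiL Rt beta) (phiH Rt beta).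

Definition eps_inf_MRC (NT NR : nat) (Rt beta gbar : R) : R :=
  let N := (NT * NR)%nat in
  xi Rt * sqrt beta * (phiH Rt beta ^ (N + 1) - phiL Rt beta ^ (N + 1)) /
  (INR (Factorial.fact NR) ^ NT * gbar ^ N * INR (N + 1)).

Definition eps_inf_SC (NT NR : nat) (Rt beta gbar : R) : R :=
  let N := (NT * NR)%nat in
  xi Rt * sqrt beta * (phiH Rt beta ^ (N + 1) - phiL Rt beta ^ (N + 1)) /
  (gbar ^ N * INR (N + 1)).

From Stdlib Require Import Reals Lra Lia.
From Coquelicot Require Import Coquelicot.
Open Scope R_scope.

(** The Erlang-type factor [1 - e^{-x} sum_{n<m} x^n/n!] equals [x^m e^{-x} q_m(x)] with
    [q_m(x) = sum_k x^k/(m+k)!], so both distribution functions have the form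
    [F(t) = (t/g)^N h(t/g)] with [h] continuous and [h(0) = (N_R!)^(-N_T)], resp. [1].
    Hence [g^N * int F = int t^N h(t/g) dt], and since [h(t/g) -> h(0)] uniformly on
    the bounded integration interval, this tends to
    [h(0) (phiH^(N+1) - phiL^(N+1)) / (N+1)]; the asymptotic rates are exactly this
    limit times [xi sqrt(beta) / g^N]. *)

Definition exp_coef (n : nat) : R := / INR (Factorial.fact n).

Definition exp_tail (m : nat) : R -> R := PSeries (PS_decr_n exp_coef m).

Lemma CV_radius_decr_n (a : nat -> R) (n : nat) :
  CV_radius (PS_decr_n a n) = CV_radius a.
Proof.
  induction n as [|n IH]; [apply CV_radius_ext; reflexivity|].
  rewrite <- IH, <- (CV_radius_decr_1 (PS_decr_n a n)).
  apply CV_radius_ext; intros k; unfold PS_decr_n, PS_decr_1.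
  f_equal; lia.
Qed.

Lemma CV_radius_exp_coef : CV_radius exp_coef = p_infty.
Proof.
  apply CV_radius_infinite_DAlembert.
  - intros n; apply Rinv_neq_0_compat, INR_fact_neq_0.
  - apply is_lim_seq_ext with (fun n => / INR (S n)).
    + intros n; unfold exp_coef; rewrite fact_simpl, mult_INR.
      pose proof (INR_fact_lt_0 n); pose proof (lt_0_INR (S n) (Nat.lt_0_succ n)).
      replace (/ (INR (S n) * INR (Factorial.fact n)) / / INR (Factorial.fact n))
        with (/ INR (S n)) by (field; split; apply Rgt_not_eq; assumption).
      symmetry; apply Rabs_pos_eq, Rlt_le, Rinv_0_lt_compat; assumption.
    + replace (Finite 0) with (Rbar_inv p_infty) by reflexivity.
      apply is_lim_seq_inv; [|discriminate].
      apply (is_lim_seq_incr_1 INR), is_lim_seq_INR.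
Qed.

Lemma continuity_pt_exp_tail (m : nat) (x : R) : continuity_pt (exp_tail m) x.
Proof.
  apply PSeries_continuity. rewrite CV_radius_decr_n, CV_radius_exp_coef. exact I.
Qed.

Lemma exp_tail_0 (m : nat) : exp_tail m 0 = / INR (Factorial.fact m).
Proof.
  unfold exp_tail. rewrite PSeries_0. unfold PS_decr_n, exp_coef. now rewrite Nat.add_0_r.
Qed.

Lemma one_minus_exp_partial_sum (m : nat) (x : R) : (1 <= m)%nat ->
  1 - exp (- x) * sum_f_R0 (fun n => / INR (Factorial.fact n) * x ^ n) (m - 1)
  = exp (- x) * (x ^ m * exp_tail m x).
Proof.
  intros Hm.
  assert (Hex : ex_pseries exp_coef x).
  { apply CV_radius_inside. rewrite CV_radius_exp_coef. exact I. }
  pose proof (PSeries_decr_n exp_coef (m - 1) x Hex) as Hsplit.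
  replace (S (m - 1)) with m in Hsplit by lia.
  rewrite <- exp_Reals in Hsplit.
  replace 1 with (exp (- x) * exp x) by (rewrite <- exp_plus, Rplus_opp_l; apply exp_0).
  rewrite Hsplit. unfold exp_tail, exp_coef. ring.
Qed.

Definition erlang_quotient (m : nat) (x : R) : R := exp (- x) * exp_tail m x.

Lemma continuity_pt_erlang_quotient_pow (m k : nat) (x : R) :
  continuity_pt (fun y => erlang_quotient m y ^ k) x.
Proof.
  apply (continuity_pt_comp (erlang_quotient m) (fun z => z ^ k));
    [|apply derivable_continuous_pt, derivable_pt_pow].
  apply continuity_pt_mult; [|apply continuity_pt_exp_tail].
  apply (continuity_pt_comp Ropp exp); [apply continuity_pt_opp, continuity_pt_id|].
  apply derivable_continuous_pt, derivable_pt_exp.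
Qed.

Lemma erlang_quotient_0 (m : nat) : erlang_quotient m 0 = / INR (Factorial.fact m).
Proof. unfold erlang_quotient. now rewrite exp_tail_0, Ropp_0, exp_0, Rmult_1_l. Qed.

Lemma F_MRC_eq (NT NR : nat) (g t : R) : (1 <= NR)%nat ->
  F_MRC NT NR g t = (t / g) ^ (NT * NR) * erlang_quotient NR (t / g) ^ NT.
Proof.
  intros HR. unfold F_MRC, erlang_quotient.
  rewrite one_minus_exp_partial_sum by exact HR.
  rewrite Nat.mul_comm, pow_mult, <- Rpow_mult_distr. f_equal. ring.
Qed.

Lemma F_SC_eq (NT NR : nat) (g t : R) :
  F_SC NT NR g t = (t / g) ^ (NT * NR) * erlang_quotient 1 (t / g) ^ (NT * NR).
Proof.
  unfold F_SC. rewrite <- Rpow_mult_distr. f_equal.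
  pose proof (one_minus_exp_partial_sum 1 (t / g) (le_n 1)) as Herl. simpl in Herl.
  unfold erlang_quotient. rewrite Rinv_1, !Rmult_1_r in Herl. rewrite Herl. ring.
Qed.

Section ScaledIntegral.

Variables (h : R -> R) (N : nat) (a b : R).
Hypothesis h_cont : forall x, continuity_pt h x.

Lemma ex_RInt_pow_mul_scale (g : R) : ex_RInt (fun t => t ^ N * h (t / g)) a b.
Proof.
  apply (@ex_RInt_continuous R_CompleteNormedModule). intros z _.
  apply continuity_pt_filterlim, continuity_pt_mult.
  - apply derivable_continuous_pt, derivable_pt_pow.
  - apply (continuity_pt_comp (fun t => t / g) h); [|apply h_cont].
    apply continuity_pt_mult; [apply continuity_pt_id|apply continuity_pt_const].
    intros u v; reflexivity.
Qed.

Lemma RInt_pow_scale (g : R) : g <> 0 ->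
  g ^ N * RInt (fun t => (t / g) ^ N * h (t / g)) a b
  = RInt (fun t => t ^ N * h (t / g)) a b.
Proof.
  intros Hg.
  assert (HgN : g ^ N <> 0) by (apply pow_nonzero, Hg).
  rewrite (RInt_ext _ (fun t => scal (/ g ^ N) (t ^ N * h (t / g)))).
  - rewrite (RInt_scal (V := R_CompleteNormedModule)) by apply ex_RInt_pow_mul_scale.
    unfold scal; simpl; unfold mult; simpl. field. exact HgN.
  - intros t _. unfold scal; simpl; unfold mult; simpl.
    unfold Rdiv. rewrite Rpow_mult_distr, pow_inv. ring.
Qed.

Lemma eventually_uniformly_close_scale (B e : R) : 0 < e ->
  Rbar_locally p_infty (fun g => forall t, Rabs t <= B -> Rabs (h (t / g) - h 0) < e).
Proof.
  intros He.
  destruct (proj1 (filterlim_locally h (h 0)) (proj1 (continuity_pt_filterlim h 0) (h_cont 0))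
              (mkposreal e He)) as [del Hdel].
  exists (Rmax 0 (B / del)). intros g Hg t Ht.
  assert (Hg0 : 0 < g) by (eapply Rle_lt_trans; [apply Rmax_l|exact Hg]).
  assert (HBg : B < g * del).
  { apply Rlt_div_l; [apply cond_pos|]. eapply Rle_lt_trans; [apply Rmax_r|exact Hg]. }
  apply (Hdel (t / g)). change (Rabs (t / g - 0) < del).
  rewrite Rminus_0_r, Rabs_div, (Rabs_pos_eq g) by lra.
  apply Rlt_div_l; lra.
Qed.

Lemma is_lim_RInt_pow_mul_scale : a <= b ->
  is_lim (fun g => RInt (fun t => t ^ N * h (t / g)) a b) p_infty
    (h 0 * ((b ^ (N + 1) - a ^ (N + 1)) / INR (N + 1))).
Proof.
  intros Hab.
  assert (Hpow : is_RInt (fun t => t ^ N) a b ((b ^ (N + 1) - a ^ (N + 1)) / INR (N + 1))).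
  { rewrite Nat.add_1_r.
    replace ((b ^ S N - a ^ S N) / INR (S N)) with (b ^ S N / INR (S N) - a ^ S N / INR (S N))
      by (field; apply not_0_INR; discriminate).
    apply is_RInt_pow. }
  apply is_lim_spec. intros eps.
  set (B := Rmax b (- a)).
  assert (HB : forall t, a <= t <= b -> Rabs t <= B) by (intros; apply Rabs_le_between_Rmax; assumption).
  assert (HBN : 0 <= B ^ N).
  { apply pow_le. pose proof (HB a (conj (Rle_refl a) Hab)). pose proof (Rabs_pos a). lra. }
  set (K := (b - a) * B ^ N + 1).
  assert (HK : 0 < K) by (unfold K; nra).
  assert (He : 0 < eps / K) by (apply Rdiv_lt_0_compat; [apply cond_pos|exact HK]).
  generalize (eventually_uniformly_close_scale B (eps / K) He); apply filter_imp. intros g Hg.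
  assert (Hdiff := is_RInt_minus _ _ a b _ _
    (RInt_correct _ a b (ex_RInt_pow_mul_scale g)) (is_RInt_scal _ a b (h 0) _ Hpow)).
  assert (Hbound : forall t, a <= t <= b ->
    norm (minus (t ^ N * h (t / g)) (scal (h 0) (t ^ N))) <= B ^ N * (eps / K)).
  { intros t Ht. change (Rabs (t ^ N * h (t / g) - h 0 * t ^ N) <= B ^ N * (eps / K)).
    replace (t ^ N * h (t / g) - h 0 * t ^ N) with (t ^ N * (h (t / g) - h 0)) by ring.
    rewrite Rabs_mult, <- RPow_abs.
    apply Rmult_le_compat; [apply pow_le, Rabs_pos|apply Rabs_pos| |].
    - apply pow_incr. split; [apply Rabs_pos|apply HB, Ht].
    - apply Rlt_le, Hg, HB, Ht. }
  eapply Rle_lt_trans; [exact (norm_RInt_le_const _ a b _ _ Hab Hbound Hdiff)|].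
  replace ((b - a) * (B ^ N * (eps / K))) with (eps * ((b - a) * B ^ N / K)) by (field; lra).
  assert ((b - a) * B ^ N / K < 1) by (apply (Rdiv_lt_1 _ _ HK); unfold K; lra).
  pose proof (cond_pos eps). nra.
Qed.

Lemma is_lim_RInt_scaled_ratio (F : R -> R -> R) (s C : R) :
  a <= b -> (forall g t, F g t = (t / g) ^ N * h (t / g)) ->
  s <> 0 -> h 0 * C = 1 -> b ^ (N + 1) - a ^ (N + 1) <> 0 ->
  is_lim (fun g => s * RInt (F g) a b /
                   (s * (b ^ (N + 1) - a ^ (N + 1)) / (C * g ^ N * INR (N + 1))))
    p_infty 1.
Proof.
  intros Hab HF Hs HC HD.
  assert (HC0 : C <> 0) by (intros ->; rewrite Rmult_0_r in HC; lra).
  assert (HN : INR (N + 1) <> 0) by (apply not_0_INR; lia).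
  apply is_lim_ext_loc with (fun g => RInt (fun t => t ^ N * h (t / g)) a b *
                                      (C * INR (N + 1) / (b ^ (N + 1) - a ^ (N + 1)))).
  - exists 0. intros g Hg.
    assert (HgN : 0 < g ^ N) by (apply pow_lt; exact Hg).
    rewrite (RInt_ext (F g) _ a b (fun t _ => HF g t)), <- RInt_pow_scale by lra.
    field. repeat split; try assumption; lra.
  - replace (Finite 1) with (Rbar_mult (h 0 * ((b ^ (N + 1) - a ^ (N + 1)) / INR (N + 1)))
                                       (C * INR (N + 1) / (b ^ (N + 1) - a ^ (N + 1)))).
    + apply is_lim_scal_r, is_lim_RInt_pow_mul_scale, Hab.
    + simpl. f_equal. rewrite <- HC. field. split; assumption.
Qed.

End ScaledIntegral.

Lemma one_lt_Rpower (x y : R) : 1 < x -> 0 < y -> 1 < Rpower x y.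
Proof. intros Hx Hy. rewrite <- (Rpower_O x) by lra. apply Rpower_lt; assumption. Qed.

Lemma xi_pos (Rt : R) : 0 < Rt -> 0 < xi Rt.
Proof.
  intros HRt. unfold xi. apply Rinv_0_lt_compat, sqrt_lt_R0.
  assert (1 < Rpower 2 (2 * Rt)) by (apply one_lt_Rpower; lra).
  pose proof PI_RGT_0. nra.
Qed.

Lemma phiL_abs_lt_phiH (Rt beta : R) : 0 < Rt -> 0 < beta ->
  Rabs (phiL Rt beta) < phiH Rt beta.
Proof.
  intros HRt Hb. unfold phiL, phiH.
  assert (0 < tau Rt).
  { unfold tau. assert (1 < Rpower 2 Rt) by (apply one_lt_Rpower; lra). lra. }
  assert (0 < / (2 * xi Rt * sqrt beta)).
  { apply Rinv_0_lt_compat. pose proof (xi_pos Rt HRt). pose proof (sqrt_lt_R0 beta Hb). nra. }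
  apply Rabs_def1; lra.
Qed.

Lemma pow_sub_pow_neq0 (x y : R) (n : nat) : Rabs x < y -> y ^ S n - x ^ S n <> 0.
Proof.
  intros Hxy.
  assert (Hy : 0 < y) by (pose proof (Rabs_pos x); lra).
  assert (Hle : Rabs x ^ n <= y ^ n) by (apply pow_incr; split; [apply Rabs_pos|lra]).
  assert (Hlt : Rabs (x ^ S n) < y ^ S n).
  { rewrite <- RPow_abs. simpl. pose proof (pow_lt y n Hy). pose proof (Rabs_pos x). nra. }
  pose proof (Rle_abs (x ^ S n)). lra.
Qed.

Theorem mainTheorem3 (NT NR : nat) (Rt beta : R) :
  (1 <= NT)%nat -> (1 <= NR)%nat -> 0 < Rt -> 0 < beta ->
  is_lim (fun gbar => eps_MRC NT NR Rt beta gbar / eps_inf_MRC NT NR Rt beta gbar)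
         p_infty 1 /\
  is_lim (fun gbar => eps_SC NT NR Rt beta gbar / eps_inf_SC NT NR Rt beta gbar)
         p_infty 1.
Proof.
  intros _ HR HRt Hb.
  assert (Hs : xi Rt * sqrt beta <> 0).
  { apply Rgt_not_eq, Rmult_lt_0_compat; [apply xi_pos, HRt|apply sqrt_lt_R0, Hb]. }
  assert (Hphi := phiL_abs_lt_phiH Rt beta HRt Hb).
  assert (Hab : phiL Rt beta <= phiH Rt beta) by (pose proof (Rle_abs (phiL Rt beta)); lra).
  assert (HD : phiH Rt beta ^ (NT * NR + 1) - phiL Rt beta ^ (NT * NR + 1) <> 0)
    by (rewrite Nat.add_1_r; apply pow_sub_pow_neq0, Hphi).
  split.
  - apply (is_lim_RInt_scaled_ratio _ _ _ _ (continuity_pt_erlang_quotient_pow NR NT));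
      [exact Hab| |exact Hs| |exact HD].
    + intros g t. apply F_MRC_eq, HR.
    + rewrite erlang_quotient_0, <- Rpow_mult_distr, Rinv_l by apply INR_fact_neq_0.
      apply pow1.
  - apply (is_lim_ext (fun g => eps_SC NT NR Rt beta g /
      (xi Rt * sqrt beta * (phiH Rt beta ^ (NT * NR + 1) - phiL Rt beta ^ (NT * NR + 1)) /
       (1 * g ^ (NT * NR) * INR (NT * NR + 1))))).
    { intros g. unfold eps_inf_SC. now rewrite Rmult_1_l. }
    apply (is_lim_RInt_scaled_ratio _ _ _ _ (continuity_pt_erlang_quotient_pow 1 (NT * NR)));
      [exact Hab| |exact Hs| |exact HD].
    + intros g t. apply F_SC_eq.
    + rewrite erlang_quotient_0. simpl. rewrite Rinv_1, pow1. apply Rmult_1_l.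
Qed.
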